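(* Consider the two-phase, two-camp opinion game described in the context, with phase-independent camp weights $w_{ig}, w_{ib}$. Let $\mathbf{r}=(\mathbf{I}-\mathbf{w}^T)^{-1}\mathbf{1}$ and $\mathbf{s}=(\mathbf{I}-\mathbf{w}^T)^{-1}(\mathbf{r}\circ\mathbf{w^0})$. Then the good camp's utility is $$\sum_i v_i^{(2)}=\sum_i s_i w_{ii}^0 v_i^0+\sum_i s_i w_{ig}x_i^{(1)}-\sum_i s_i w_{ib}y_i^{(1)}+\sum_i r_i w_{ig}x_i^{(2)}-\sum_i r_i w_{ib}y_i^{(2)},$$ and the following is an optimal strategy for the good camp regardless of the bad camp's strategy (and symmetrically for the bad camp, with $w_{ib}$ in place of $w_{ig}$ and $k_b$ in place of $k_g$), so that the profile of these strategies is a Nash equilibrium: let $M=\max_i \max\{s_i w_{ig}, r_i w_{ig}\}$. If $M\le 0$, invest nothing. If $M>0$, invest the entire budget $k_g$ on a node $i$ attaining $M$; if $\max_i s_i w_{ig}>\max_j r_j w_{jg}$ the whole budget is invested in the first phase (on a maximizer of $s_i w_{ig}$), if $\max_i s_i w_{ig}<\max_j r_j w_{jg}$ the whole budget is invested in the second phase (on a maximizer of $r_j w_{jg}$), and if they are equal either phase is optimal.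
   Context: A social network has node set $N$, $|N|=n$, and a real $n\times n$ matrix $\mathbf{w}=(w_{ij})$ of influence weights with $\sum_j |w_{ij}|<1$ for every $i$ (so $\mathbf{I}-\mathbf{w}$ is invertible). Each node $i$ has an initial opinion $v_i^0$, a weight $w_{ii}^0$ on its initial bias, and weights $w_{ig}, w_{ib}$ attributed to the good and bad camps; with $|w_{ii}^0|+\sum_j|w_{ij}|+|w_{ig}|+|w_{ib}|\le 1$. Vectors $\mathbf{w^0},\mathbf{w_g},\mathbf{w_b}$ collect these; $\circ$ is the entrywise (Hadamard) product and $\mathbf{1}$ the all-ones vector. The good camp chooses nonnegative vectors $\mathbf{x^{(1)}},\mathbf{x^{(2)}}$ with $\sum_i (x_i^{(1)}+x_i^{(2)})\le k_g$, the bad camp nonnegative $\mathbf{y^{(1)}},\mathbf{y^{(2)}}$ with $\sum_i (y_i^{(1)}+y_i^{(2)})\le k_b$ ($k_g,k_b\ge 0$). Opinions evolve by $\mathbf{v^{(0)}}=\mathbf{v^0}$ and, for phases $p=1,2$, $\mathbf{v^{(p)}}=(\mathbf{I}-\mathbf{w})^{-1}(\mathbf{w^0}\circ\mathbf{v^{(p-1)}}+\mathbf{w_g}\circ\mathbf{x^{(p)}}-\mathbf{w_b}\circ\mathbf{y^{(p)}})$. The game is zero-sum: the good camp's utility is $\sum_i v_i^{(2)}$ and the bad camp's is $-\sum_i v_i^{(2)}$. *)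

From HB Require Import structures.
From mathcomp Require Import all_boot all_order all_algebra.
Set Implicit Arguments. Unset Strict Implicit. Unset Printing Implicit Defensive.
Import Order.TTheory GRing.Theory Num.Theory.
Local Open Scope ring_scope.

Section Game.
Variables (R : realFieldType) (n : nat).

Definition hadam (a b : 'cV[R]_n) : 'cV[R]_n := \col_i (a i 0 * b i 0).

Definition phase (w : 'M[R]_n) (w0 wg wb vprev x y : 'cV[R]_n) : 'cV[R]_n :=
  invmx (1%:M - w) *m (hadam w0 vprev + hadam wg x - hadam wb y).

Definition utility (w : 'M[R]_n) (w0 wg wb v0 x1 x2 y1 y2 : 'cV[R]_n) : R :=
  let v1 := phase w w0 wg wb v0 x1 y1 in
  let v2 := phase w w0 wg wb v1 x2 y2 in
  \sum_i v2 i 0.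

Definition rvec (w : 'M[R]_n) : 'cV[R]_n := invmx (1%:M - w^T) *m const_mx 1.

Definition svec (w : 'M[R]_n) (w0 : 'cV[R]_n) : 'cV[R]_n :=
  invmx (1%:M - w^T) *m hadam (rvec w) w0.

Definition feasible (k : R) (x1 x2 : 'cV[R]_n) : Prop :=
  (forall i, 0 <= x1 i 0) /\ (forall i, 0 <= x2 i 0) /\
  \sum_i (x1 i 0 + x2 i 0) <= k.

Definition point (k : R) (i : 'I_n) : 'cV[R]_n := \col_j (if j == i then k else 0).

(* The prescribed strategy of a camp with camp weight vector wc and budget k.
   a_i = s_i wc_i (phase-1 value), b_i = r_i wc_i (phase-2 value),
   M = max_i max(a_i, b_i).
   - If M <= 0 (i.e. all a_i, b_i <= 0): invest nothing.
   - If M > 0: the whole budget k is put on one node i attaining M, in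
     phase 1 if a_i = M, or in phase 2 if b_i = M.  (Thus if max a > max b
     only phase 1 is possible, if max a < max b only phase 2, and if
     equal either phase is allowed.) *)
Definition prescribed (w : 'M[R]_n) (w0 wc : 'cV[R]_n) (k : R)
    (x1 x2 : 'cV[R]_n) : Prop :=
  let a := fun i => svec w w0 i 0 * wc i 0 in
  let b := fun i => rvec w i 0 * wc i 0 in
  if [forall i, (a i <= 0) && (b i <= 0)] then x1 = 0 /\ x2 = 0
  else exists i : 'I_n,
    ((forall j, a j <= a i /\ b j <= a i) /\ x1 = point k i /\ x2 = 0) \/
    ((forall j, a j <= b i /\ b j <= b i) /\ x1 = 0 /\ x2 = point k i).

End Game.

(** The utility is linear in each phase's input, so it can be pushed backwards
    through the two phases by transposition: summing [v2] against [1] is summing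
    the phase-2 input against [r = (I - w^T)^-1 1], and the part of that input
    coming from [v1] is then summed against [s = (I - w^T)^-1 (r o w0)].  Hence
    the good camp's payoff is [sum s_i wg_i x1_i + sum r_i wg_i x2_i] plus terms
    it does not control, a linear function maximized over the budget simplex by
    putting everything on a largest positive coefficient, or nothing if there is
    none; symmetrically for the bad camp. *)

From HB Require Import structures.
From mathcomp Require Import all_boot all_order all_algebra.
From mathcomp Require Import ring lra.
Set Implicit Arguments. Unset Strict Implicit. Unset Printing Implicit Defensive.
Import Order.TTheory GRing.Theory Num.Theory.
Local Open Scope ring_scope.

Lemma sum_mulmx_trmx (R : comPzRingType) (n : nat) (M : 'M[R]_n) (a u : 'cV[R]_n) :
  \sum_i a i 0 * (M *m u) i 0 = \sum_j (M^T *m a) j 0 * u j 0.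
Proof.
under eq_bigr do rewrite mxE big_distrr.
under [RHS]eq_bigr do rewrite mxE big_distrl.
rewrite exchange_big; apply: eq_bigr => j _; apply: eq_bigr => i _.
by rewrite mxE /= mulrA [a i 0 * _]mulrC.
Qed.

Section ClosedForm.
Variables (R : realFieldType) (n : nat) (w : 'M[R]_n) (w0 wg wb : 'cV[R]_n).

(* No invertibility of [I - w] is needed: [invmx A^T = (invmx A)^T] for every [A]. *)
Lemma sum_phase (a v x y : 'cV[R]_n) :
  let c := invmx (1%:M - w^T) *m a in
  \sum_i a i 0 * phase w w0 wg wb v x y i 0 =
    \sum_i c i 0 * w0 i 0 * v i 0 + \sum_i c i 0 * wg i 0 * x i 0
  - \sum_i c i 0 * wb i 0 * y i 0.
Proof.
rewrite /phase sum_mulmx_trmx trmx_inv linearB /= trmx1.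
rewrite -big_split -sumrB /=; apply: eq_bigr => i _; rewrite !mxE; ring.
Qed.

Lemma utility_closed_form (v0 x1 x2 y1 y2 : 'cV[R]_n) :
  utility w w0 wg wb v0 x1 x2 y1 y2 =
    \sum_i svec w w0 i 0 * w0 i 0 * v0 i 0
  + \sum_i svec w w0 i 0 * wg i 0 * x1 i 0
  - \sum_i svec w w0 i 0 * wb i 0 * y1 i 0
  + \sum_i rvec w i 0 * wg i 0 * x2 i 0
  - \sum_i rvec w i 0 * wb i 0 * y2 i 0.
Proof.
rewrite /utility.
have sum_as_dot (u : 'cV[R]_n) : \sum_i u i 0 = \sum_i (const_mx 1 : 'cV_n) i 0 * u i 0.
  by apply: eq_bigr => i _; rewrite mxE mul1r.
rewrite sum_as_dot sum_phase -/(rvec w).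
have sum_hadam (v : 'cV[R]_n) : \sum_i rvec w i 0 * w0 i 0 * v i 0 =
    \sum_i hadam (rvec w) w0 i 0 * v i 0.
  by apply: eq_bigr => i _; rewrite [hadam _ _ _ _]mxE.
by rewrite sum_hadam sum_phase -/(svec w w0).
Qed.

End ClosedForm.

Section BudgetAllocation.
Variables (R : realFieldType) (n : nat).
Implicit Types (a b : 'I_n -> R) (k : R) (i j : 'I_n).

Definition payoff a b (x1 x2 : 'cV[R]_n) : R := \sum_i a i * x1 i 0 + \sum_i b i * x2 i 0.

(* The body of [prescribed], for arbitrary phase-1 and phase-2 coefficients. *)
Definition best_allocation a b k (x1 x2 : 'cV[R]_n) : Prop :=
  if [forall i, (a i <= 0) && (b i <= 0)] then x1 = 0 /\ x2 = 0
  else exists i : 'I_n,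
    ((forall j, a j <= a i /\ b j <= a i) /\ x1 = point k i /\ x2 = 0) \/
    ((forall j, a j <= b i /\ b j <= b i) /\ x1 = 0 /\ x2 = point k i).

Lemma sum_mul_point a k i : \sum_j a j * point k i j 0 = a i * k.
Proof.
rewrite (bigD1 i) //= big1 ?addr0; first by rewrite mxE eqxx.
by move=> j /negbTE ji; rewrite mxE ji mulr0.
Qed.

Lemma sum_point k i : \sum_j point k i j 0 = k.
Proof.
by rewrite -[RHS]mul1r -(sum_mul_point (fun=> 1) k i); apply: eq_bigr => j _; rewrite mul1r.
Qed.

Lemma point_ge0 k i j : 0 <= k -> 0 <= point k i j 0.
Proof. by move=> k0; rewrite mxE; case: ifP. Qed.

Lemma sum_mul_cV0 a : \sum_j a j * (0 : 'cV[R]_n) j 0 = 0.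
Proof. by rewrite big1 // => j _; rewrite mxE mulr0. Qed.

Lemma payoff_point1 a b k i : payoff a b (point k i) 0 = a i * k.
Proof. by rewrite /payoff sum_mul_point sum_mul_cV0 addr0. Qed.

Lemma payoff_point2 a b k i : payoff a b 0 (point k i) = b i * k.
Proof. by rewrite /payoff sum_mul_point sum_mul_cV0 add0r. Qed.

Lemma payoff0 a b : payoff a b 0 0 = 0.
Proof. by rewrite /payoff !sum_mul_cV0 addr0. Qed.

Lemma payoff_le a b M k (x1 x2 : 'cV[R]_n) :
  (forall j, a j <= M /\ b j <= M) -> 0 <= M -> feasible k x1 x2 ->
  payoff a b x1 x2 <= M * k.
Proof.
move=> abM M0 [x1_ge0 [x2_ge0 budget]].
rewrite /payoff -big_split /=.
apply: (@le_trans _ _ (\sum_i M * (x1 i 0 + x2 i 0))).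
  apply: ler_sum => i _; rewrite mulrDr; have [aM bM] := abM i.
  by apply: lerD; apply: ler_wpM2r.
by rewrite -mulr_sumr; apply: ler_wpM2l.
Qed.

Lemma feasible0 k : 0 <= k -> feasible k (0 : 'cV[R]_n) 0.
Proof.
move=> k0; do 2![split; first by move=> j; rewrite mxE].
by rewrite big1 // => j _; rewrite !mxE addr0.
Qed.

Lemma feasible_point1 k i : 0 <= k -> feasible k (point k i) 0.
Proof.
move=> k0; split; first by move=> j; apply: point_ge0.
split; first by move=> j; rewrite mxE.
by under eq_bigr do rewrite [(0 : 'cV[R]_n) _ _]mxE addr0; rewrite sum_point.
Qed.

Lemma feasible_point2 k i : 0 <= k -> feasible k 0 (point k i).
Proof.
move=> k0; split; first by move=> j; rewrite mxE.
split; first by move=> j; apply: point_ge0.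
by under eq_bigr do rewrite [(0 : 'cV[R]_n) _ _]mxE add0r; rewrite sum_point.
Qed.

Lemma best_allocation_optimal a b k (x1 x2 : 'cV[R]_n) : 0 <= k ->
  best_allocation a b k x1 x2 ->
  feasible k x1 x2 /\
  forall x1' x2', feasible k x1' x2' -> payoff a b x1' x2' <= payoff a b x1 x2.
Proof.
rewrite /best_allocation => k0; case: ifP => [/forallP all_le0 [-> ->] | some_pos].
  split; first exact: feasible0.
  move=> x1' x2' feas; rewrite payoff0 -(mul0r k); apply: payoff_le feas => //.
  by move=> j; apply/andP.
have [j0 j0_pos] : exists j, ~~ ((a j <= 0) && (b j <= 0)).
  by apply/existsP; rewrite -negb_forall some_pos.
have M_ge0 M : (forall j, a j <= M /\ b j <= M) -> 0 <= M.
  move=> abM; have [aM bM] := abM j0.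
  by move: j0_pos; rewrite negb_and -!ltNge => /orP[] /ltW; lra.
case=> i [[abM [-> ->]] | [abM [-> ->]]].
- split; first exact: feasible_point1.
  by move=> x1' x2' feas; rewrite payoff_point1; exact: payoff_le (M_ge0 _ abM) feas.
- split; first exact: feasible_point2.
  by move=> x1' x2' feas; rewrite payoff_point2; exact: payoff_le (M_ge0 _ abM) feas.
Qed.

End BudgetAllocation.

Section Game.
Variables (R : realFieldType) (n : nat) (w : 'M[R]_n) (w0 wg wb v0 : 'cV[R]_n).

Let camp_payoff (wc : 'cV[R]_n) :=
  payoff (fun i => svec w w0 i 0 * wc i 0) (fun i => rvec w i 0 * wc i 0).

Lemma utility_camp_payoffs x1 x2 y1 y2 :
  utility w w0 wg wb v0 x1 x2 y1 y2 =
    \sum_i svec w w0 i 0 * w0 i 0 * v0 i 0 + camp_payoff wg x1 x2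
  - camp_payoff wb y1 y2.
Proof. rewrite utility_closed_form /camp_payoff /payoff; ring. Qed.

Lemma prescribed_good_optimal kg x1 x2 : 0 <= kg ->
  prescribed w w0 wg kg x1 x2 -> feasible kg x1 x2 /\
  forall y1 y2 x1' x2', feasible kg x1' x2' ->
    utility w w0 wg wb v0 x1' x2' y1 y2 <= utility w w0 wg wb v0 x1 x2 y1 y2.
Proof.
move=> kg0 /(best_allocation_optimal kg0) [feas best].
split=> // y1 y2 x1' x2' /best; rewrite !utility_camp_payoffs /camp_payoff; lra.
Qed.

Lemma prescribed_bad_optimal kb y1 y2 : 0 <= kb ->
  prescribed w w0 wb kb y1 y2 -> feasible kb y1 y2 /\
  forall x1 x2 y1' y2', feasible kb y1' y2' ->
    utility w w0 wg wb v0 x1 x2 y1 y2 <= utility w w0 wg wb v0 x1 x2 y1' y2'.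
Proof.
move=> kb0 /(best_allocation_optimal kb0) [feas best].
split=> // x1 x2 y1' y2' /best; rewrite !utility_camp_payoffs /camp_payoff; lra.
Qed.

End Game.

Theorem mainTheorem1 (R : realFieldType) (n : nat) (w : 'M[R]_n)
    (w0 wg wb v0 : 'cV[R]_n) (kg kb : R)
    (hw : forall i, \sum_j `|w i j| < 1)
    (hw' : forall i, `|w0 i 0| + \sum_j `|w i j| + `|wg i 0| + `|wb i 0| <= 1)
    (hkg : 0 <= kg) (hkb : 0 <= kb) :
  (* closed form of the good camp's utility *)
  (forall x1 x2 y1 y2 : 'cV[R]_n,
     utility w w0 wg wb v0 x1 x2 y1 y2 =
       \sum_i svec w w0 i 0 * w0 i 0 * v0 i 0
     + \sum_i svec w w0 i 0 * wg i 0 * x1 i 0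
     - \sum_i svec w w0 i 0 * wb i 0 * y1 i 0
     + \sum_i rvec w i 0 * wg i 0 * x2 i 0
     - \sum_i rvec w i 0 * wb i 0 * y2 i 0)
  /\
  (* the prescribed good strategy is optimal against every bad strategy *)
  (forall x1 x2, prescribed w w0 wg kg x1 x2 -> feasible kg x1 x2 /\
     forall y1 y2, feasible kb y1 y2 ->
     forall x1' x2', feasible kg x1' x2' ->
       utility w w0 wg wb v0 x1' x2' y1 y2 <= utility w w0 wg wb v0 x1 x2 y1 y2)
  /\
  (* the prescribed bad strategy is optimal against every good strategy *)
  (forall y1 y2, prescribed w w0 wb kb y1 y2 -> feasible kb y1 y2 /\
     forall x1 x2, feasible kg x1 x2 ->
     forall y1' y2', feasible kb y1' y2' ->
       utility w w0 wg wb v0 x1 x2 y1 y2 <= utility w w0 wg wb v0 x1 x2 y1' y2')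
  /\
  (* hence any profile of prescribed strategies is a Nash equilibrium *)
  (forall x1 x2 y1 y2, prescribed w w0 wg kg x1 x2 -> prescribed w w0 wb kb y1 y2 ->
     (forall x1' x2', feasible kg x1' x2' ->
        utility w w0 wg wb v0 x1' x2' y1 y2 <= utility w w0 wg wb v0 x1 x2 y1 y2) /\
     (forall y1' y2', feasible kb y1' y2' ->
        utility w w0 wg wb v0 x1 x2 y1 y2 <= utility w w0 wg wb v0 x1 x2 y1' y2')).
Proof.
have good x1 x2 := @prescribed_good_optimal R n w w0 wg wb v0 kg x1 x2 hkg.
have bad y1 y2 := @prescribed_bad_optimal R n w w0 wg wb v0 kb y1 y2 hkb.
split; first exact: utility_closed_form.
split; first by move=> x1 x2 /good [feas best]; split=> // y1 y2 _; exact: best.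
split; first by move=> y1 y2 /bad [feas best]; split=> // x1 x2 _; exact: best.
move=> x1 x2 y1 y2 /good [_ good_best] /bad [_ bad_best].
by split=> z1 z2; [exact: good_best | exact: bad_best].
Qed.
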